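(* Let $K$ be a finite group, $N\trianglelefteq K$, and $H=\Delta_K(1\times N)=\{(gn,g):g\in K,n\in N\}\le K\times K$. Then every cohomology class in $H^2(H;\mathbb{T})$ contains a cocycle $\psi$ satisfying, for all $g,k\in K$ and $n,m\in N$, $$\psi((gn,g),(km,k))=\overline{\beta^{\psi}_{(k,k)}((n,1))}\,\psi((n^k,1),(m,1))\,\psi((g,g),(k,k)).$$
   Context: $n^k=k^{-1}nk$. For $\psi\in Z^2(X;\mathbb{T})$ on a group $X$, $\beta^\psi_x(y)=\psi(x,x^{-1}yx)\,\overline{\psi(y,x)}$. *)

(* T = unit circle of an arbitrary numClosedFieldType C
   (e.g. algC); values psi x y with `|psi x y| = 1. *)
From HB Require Import structures.
From mathcomp Require Import all_boot all_order all_algebra all_fingroup all_solvable.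
Set Implicit Arguments. Unset Strict Implicit. Unset Printing Implicit Defensive.
Import Order.TTheory GRing.Theory Num.Theory.
Local Open Scope ring_scope.

Definition Delta (gT : finGroupType) (K N : {set gT}) : {set gT * gT} :=
  [set ((g * n)%g, g) | g in K, n in N].

Definition is_cocycle (C : numClosedFieldType) (aT : finGroupType)
  (H : {set aT}) (psi : aT -> aT -> C) : Prop :=
  (forall x y, x \in H -> y \in H -> `|psi x y| = 1) /\
  (forall x y z, x \in H -> y \in H -> z \in H ->
     psi x y * psi (x * y)%g z = psi x (y * z)%g * psi y z).

Definition cohomologous (C : numClosedFieldType) (aT : finGroupType)
  (H : {set aT}) (psi psi' : aT -> aT -> C) : Prop :=
  exists mu : aT -> C, (forall x, x \in H -> `|mu x| = 1) /\
    (forall x y, x \in H -> y \in H ->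
       psi' x y = psi x y * mu x * mu y / mu (x * y)%g).

(* beta^psi_x(y) = psi(x, x^-1 y x) * conj(psi(y, x)); note y ^ x = x^-1 y x *)
Definition beta (C : numClosedFieldType) (aT : finGroupType)
  (psi : aT -> aT -> C) (x y : aT) : C :=
  psi x (y ^ x)%g * (psi y x)^*.

From HB Require Import structures.
From mathcomp Require Import all_boot all_order all_algebra all_fingroup all_solvable.
From mathcomp Require Import ring.
Set Implicit Arguments. Unset Strict Implicit. Unset Printing Implicit Defensive.
Import Order.TTheory GRing.Theory Num.Theory.
Local Open Scope ring_scope.

(* Twisting phi by the coboundary of mu((g,g)(n,1)) := phi((g,g),(n,1)) / phi(1,1)^2
   makes the cocycle identically 1 on pairs ((g,g),(n,1)).  For such a normalized
   psi, four instances of the cocycle identity, combined with the commutation rule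
   (n,1)(k,k) = (k,k)(n^k,1), split psi((g,g)(n,1),(k,k)(m,1)) into
   psi((g,g),(k,k)) psi((n,1),(k,k)) psi((n^k,1),(m,1)), and the middle factor is
   the conjugate of beta^psi_(k,k)((n,1)). *)

Section Cocycle.

Variables (C : numClosedFieldType) (aT : finGroupType) (H : {group aT}).
Variable psi : aT -> aT -> C.
Hypothesis psiH : is_cocycle H psi.

Lemma cocycle_neq0 x y : x \in H -> y \in H -> psi x y != 0.
Proof. by move=> xH yH; rewrite -normr_eq0 psiH.1 ?oner_eq0. Qed.

Lemma cocycle_x1 x : x \in H -> psi x 1%g = psi 1%g 1%g.
Proof.
move=> xH; have := psiH.2 x 1%g 1%g xH (group1 H) (group1 H); rewrite !mulg1.
by apply/mulfI; apply: cocycle_neq0.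
Qed.

Lemma cocycle_1x x : x \in H -> psi 1%g x = psi 1%g 1%g.
Proof.
move=> xH; have := psiH.2 1%g 1%g x (group1 H) (group1 H) xH; rewrite !mul1g.
by move/mulIf => -> //; apply: cocycle_neq0.
Qed.

Section Factorization.

Variables D E : {set aT}.
Hypotheses (sDH : D \subset H) (sEH : E \subset H).
Hypotheses (mulD : {in D &, forall d k, d * k \in D}%g)
           (mulE : {in E &, forall n m, n * m \in E}%g)
           (conjE : {in E & D, forall n k, n ^ k \in E}%g).
Hypothesis psiDE : {in D & E, forall d n, psi d n = 1}.

Lemma cocycle_factor d k n m : d \in D -> k \in D -> n \in E -> m \in E ->
  psi (d * n)%g (k * m)%g = psi d k * psi n k * psi (n ^ k)%g m.
Proof.
move=> dD kD nE mE.
have [dH kH] := (subsetP sDH d dD, subsetP sDH k kD).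
have [nH mH] := (subsetP sEH n nE, subsetP sEH m mE).
have nkE := conjE nE kD; have nkH := subsetP sEH _ nkE.
have nkmE := mulE nkE mE; have nkmH := subsetP sEH _ nkmE.
have kmH : (k * m)%g \in H by rewrite groupM.
have swap_nk : (n * k)%g = (k * n ^ k)%g by apply: conjgC.
have swap_nkm : (n * (k * m))%g = (k * (n ^ k * m))%g by
  rewrite mulgA swap_nk -mulgA.
have E1 := psiH.2 _ _ _ dH nH kmH.
rewrite (psiDE dD nE) mul1r swap_nkm in E1.
have E2 := psiH.2 _ _ _ dH kH nkmH.
rewrite (psiDE (mulD dD kD) nkmE) (psiDE kD nkmE) !mulr1 in E2.
have E3 := psiH.2 _ _ _ nH kH mH.
rewrite (psiDE kD mE) mulr1 swap_nk in E3.
have E4 := psiH.2 _ _ _ kH nkH mH.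
rewrite (psiDE kD nkE) (psiDE kD nkmE) !mul1r in E4.
by rewrite E1 -E2 -E3 E4 mulrA.
Qed.

End Factorization.

End Cocycle.

Definition twist (C : numClosedFieldType) (aT : finGroupType)
  (psi : aT -> aT -> C) (mu : aT -> C) (x y : aT) : C :=
  psi x y * mu x * mu y / mu (x * y)%g.

Lemma twist_cocycle (C : numClosedFieldType) (aT : finGroupType) (H : {group aT})
  (psi : aT -> aT -> C) (mu : aT -> C) :
  is_cocycle H psi -> {in H, forall x, `|mu x| = 1} -> is_cocycle H (twist psi mu).
Proof.
move=> [psi1 psiM] mu1.
have muH x : x \in H -> mu x != 0 by move=> /mu1 mux; rewrite -normr_eq0 mux oner_eq0.
split=> [x y xH yH | x y z xH yH zH].
  by rewrite /twist !normrM normfV psi1 ?mu1 ?groupM // invr1 !mulr1.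
rewrite /twist; transitivity
  (psi x y * psi (x * y)%g z * (mu x * mu y * mu z / mu (x * y * z)%g)).
  by field; rewrite !muH ?groupM.
by rewrite psiM // -mulgA; field; rewrite !muH ?groupM.
Qed.

Lemma beta_conj (C : numClosedFieldType) (aT : finGroupType)
  (psi : aT -> aT -> C) x y :
  psi x (y ^ x)%g = 1 -> (beta psi x y)^* = psi y x.
Proof. by rewrite /beta => ->; rewrite mul1r conjCK. Qed.

Lemma pair_conj1 (gT : finGroupType) (n k : gT) :
  ((n, 1%g) ^ (k, k))%g = ((n ^ k)%g, 1%g) :> gT * gT.
Proof. by rewrite -[LHS]/((n ^ k)%g, (k^-1 * (1 * k))%g) mul1g mulVg. Qed.

Lemma pair_mul1 (gT : finGroupType) (g n : gT) :
  ((g, g) * (n, 1%g))%g = ((g * n)%g, g) :> gT * gT.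
Proof. by rewrite -[LHS]/((g * n)%g, (g * 1)%g) mulg1. Qed.

Section Delta.

Variables (gT : finGroupType) (K N : {group gT}).
Hypothesis nsNK : (N <| K)%g.

Lemma memJ_normal n k : n \in N -> k \in K -> (n ^ k)%g \in N.
Proof. by move=> nN kK; rewrite memJ_norm // (subsetP (normal_norm nsNK)). Qed.

Lemma Delta_diag g : g \in K -> (g, g) \in Delta K N.
Proof. by move=> gK; apply/imset2P; exists g 1%g; rewrite ?mulg1. Qed.

Lemma Delta_fibre n : n \in N -> (n, 1%g) \in Delta K N.
Proof. by move=> nN; apply/imset2P; exists 1%g n; rewrite ?mul1g. Qed.

Lemma Delta_group_set : group_set (Delta K N).
Proof.
apply/group_setP; split; first exact: Delta_diag.
move=> _ _ /imset2P[g n gK nN ->] /imset2P[k m kK mN ->].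
have nkN := memJ_normal nN kK.
apply/imset2P; exists (g * k)%g (n ^ k * m)%g; try exact: groupM.
by congr (_, _); rewrite conjgE !mulgA mulgK.
Qed.

Definition Delta_group := Group Delta_group_set.

Lemma Delta_normalization (C : numClosedFieldType) (phi : gT * gT -> gT * gT -> C) :
  is_cocycle (Delta K N) phi ->
  exists psi, [/\ is_cocycle (Delta K N) psi, cohomologous (Delta K N) phi psi &
                  {in K & N, forall g n, psi (g, g) (n, 1%g) = 1}].
Proof.
move=> phiH; pose c := phi 1%g 1%g.
have c_neq0 : c != 0 by apply: (cocycle_neq0 (H := Delta_group)).
pose mu x := phi (x.2, x.2) ((x.2^-1 * x.1)%g, 1%g) / c ^+ 2.
have mu1 : {in Delta K N, forall x, `|mu x| = 1}.
  move=> _ /imset2P[g n gK nN ->]; rewrite /mu /= mulKg normrM normfV normrX.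
  by rewrite !phiH.1 ?expr1n ?invr1 ?mulr1 ?Delta_diag ?Delta_fibre.
exists (twist phi mu); split; first exact: (twist_cocycle (H := Delta_group)).
  by exists mu.
move=> g n gK nN; have [gH nH] := (Delta_diag gK, Delta_fibre nN).
rewrite /twist /mu /= !mulg1 mulVg invg1 !mul1g mulKg.
rewrite (cocycle_x1 (H := Delta_group)) // (cocycle_1x (H := Delta_group)) //.
have phi_neq0 : phi (g, g) (n, 1%g) != 0 by apply: (cocycle_neq0 (H := Delta_group)).
by rewrite -/c; field; rewrite c_neq0 phi_neq0.
Qed.

Lemma Delta_factor (C : numClosedFieldType) (psi : gT * gT -> gT * gT -> C) :
    is_cocycle (Delta K N) psi -> {in K & N, forall g n, psi (g, g) (n, 1%g) = 1} ->
  forall g k n m, g \in K -> k \in K -> n \in N -> m \in N ->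
    psi ((g * n)%g, g) ((k * m)%g, k)
      = psi (g, g) (k, k) * psi (n, 1%g) (k, k) * psi ((n ^ k)%g, 1%g) (m, 1%g).
Proof.
move=> psiH psi1 g k n m gK kK nN mN.
pose D := [set x : gT * gT | (x.1 == x.2) && (x.2 \in K)].
pose E := [set x : gT * gT | (x.1 \in N) && (x.2 == 1%g)].
have sDH : D \subset Delta K N.
  by apply/subsetP=> -[x y]; rewrite inE /= => /andP[/eqP-> /Delta_diag].
have sEH : E \subset Delta K N.
  by apply/subsetP=> -[x y]; rewrite inE /= => /andP[? /eqP->]; apply: Delta_fibre.
have mulD : {in D &, forall d k, d * k \in D}%g.
  move=> [x1 x2] [y1 y2]; rewrite !inE /= => /andP[/eqP-> x2K] /andP[/eqP-> y2K].
  by rewrite eqxx groupM.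
have mulE : {in E &, forall n m, n * m \in E}%g.
  move=> [x1 x2] [y1 y2]; rewrite !inE /= => /andP[x1N /eqP->] /andP[y1N /eqP->].
  by rewrite groupM //=; apply/eqP; apply: mulg1.
have conjE : {in E & D, forall n k, n ^ k \in E}%g.
  move=> [x1 x2] [y1 y2]; rewrite !inE /= => /andP[x1N /eqP->] /andP[/eqP-> y2K].
  by apply/andP; split; [exact: memJ_normal | apply/eqP; exact: conj1g].
have psiDE : {in D & E, forall d n, psi d n = 1}.
  move=> [x1 x2] [y1 y2]; rewrite !inE /= => /andP[/eqP-> x2K] /andP[y1N /eqP->].
  exact: psi1.
rewrite -!pair_mul1 -pair_conj1.
rewrite (cocycle_factor (H := Delta_group) psiH sDH sEH mulD mulE conjE psiDE) //.
all: by rewrite inE /= ?eqxx ?gK ?kK ?nN ?mN.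
Qed.

End Delta.

Theorem claim2 (C : numClosedFieldType) (gT : finGroupType)
  (K N : {group gT}) (nsNK : (N <| K)%g) (phi : gT * gT -> gT * gT -> C) :
  is_cocycle (Delta K N) phi ->
  exists psi : gT * gT -> gT * gT -> C,
    [/\ is_cocycle (Delta K N) psi,
        cohomologous (Delta K N) phi psi &
        forall g k n m, g \in K -> k \in K -> n \in N -> m \in N ->
          psi ((g * n)%g, g) ((k * m)%g, k) =
            (beta psi (k, k) (n, 1%g))^* * psi ((n ^ k)%g, 1%g) (m, 1%g)
              * psi (g, g) (k, k)].
Proof.
move=> /(Delta_normalization nsNK)[psi [psiH phi_psi psi1]].
exists psi; split=> // g k n m gK kK nN mN.
have betaE : (beta psi (k, k) (n, 1%g))^* = psi (n, 1%g) (k, k).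
  by apply: beta_conj; rewrite pair_conj1 psi1 // (memJ_normal nsNK).
by rewrite (Delta_factor nsNK psiH psi1) // betaE [RHS]mulrC mulrA.
Qed.
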